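(* Let $P,Q$ be $n\times n$ stochastic matrices. For every $\delta>0$ and every $s\in\{0,1,\dots,n\}$, $$\Phi_{PQ}(s)\le\Phi_P\big(\delta\,\Phi_Q(s)\big)+\frac{n}{\delta}.$$
   Context: A matrix is stochastic if it is entrywise nonnegative with all row sums equal to $1$. For an $n\times n$ stochastic matrix $P$, the maximum one-time influence function is defined by $\Phi_P(0)=0$ and, for $s\in\{1,\dots,n\}$, $\Phi_P(s)=\max_{\mathcal{B}\subseteq\{1,\dots,n\},\,|\mathcal{B}|=s}\sum_{i=1}^n\sum_{j\in\mathcal{B}}P_{ij}$. It is extended to real arguments $x\ge0$ by $\Phi_P(x)=\Phi_P(\min(\lfloor x\rfloor,n))$. *)

From mathcomp Require Import all_boot all_order all_algebra.
Set Implicit Arguments. Unset Strict Implicit. Unset Printing Implicit Defensive.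
Import Order.TTheory GRing.Theory Num.Theory.
Local Open Scope ring_scope.

Definition stochastic (R : numDomainType) (n : nat) (P : 'M[R]_n) : Prop :=
  (forall i j, 0 <= P i j) /\ (forall i, \sum_(j < n) P i j = 1).

(* Maximum one-time influence function on integer arguments:
   Phi_P(s) = max over B with |B| = min(s,n) of sum_i sum_{j in B} P i j.
   (Phi_P(0) = 0 automatically: the only set of size 0 is empty.)
   The max over the nonempty finite family is taken with Num.max starting
   from 0; since all sums are >= 0 for stochastic P this is the true max. *)
Definition Phi_nat (R : realDomainType) (n : nat) (P : 'M[R]_n) (s : nat) : R :=
  \big[Num.max/0]_(B : {set 'I_n} | #|B| == minn s n)
     \sum_(i < n) \sum_(j in B) P i j.

Definition Phi (R : archiRealFieldType) (n : nat) (P : 'M[R]_n) (x : R) : R :=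
  Phi_nat P (minn (Num.truncn x) n).

From mathcomp Require Import all_boot all_order all_algebra.
Set Implicit Arguments. Unset Strict Implicit. Unset Printing Implicit Defensive.
Import Order.TTheory GRing.Theory Num.Theory.
Local Open Scope ring_scope.

(* Fix B with |B| = s.  With c_k the column sums of P (they add up to n)
   and q_k the mass that row k of Q puts on B, the influence of PQ on B is
   sum_k c_k q_k, where 0 <= q_k <= 1 and sum_k q_k <= Phi_Q(s).  By Markov's
   inequality at most delta Phi_Q(s) indices have delta q_k >= 1; they
   contribute at most their column sums, hence at most Phi_P(delta Phi_Q(s)).
   The other indices contribute at most sum_k c_k / delta = n / delta. *)

Lemma exists_superset_card (T : finType) (A : {set T}) t :
  (#|A| <= t <= #|T|)%N -> exists2 A' : {set T}, A \subset A' & #|A'| = t.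
Proof.
elim: t => [|t IH] /andP[leAt letT].
  by exists A => //; apply/eqP; rewrite -leqn0.
have [ltAt | geAt] := ltnP #|A| t.+1; last first.
  by exists A => //; apply/eqP; rewrite eqn_leq leAt geAt.
have [|A' sAA' cardA'] := IH; first by rewrite -ltnS ltAt ltnW.
have : (0 < #|~: A'|)%N by rewrite cardsCs setCK cardA' subn_gt0.
case/card_gt0P => x; rewrite in_setC => A'x.
exists (x |: A'); first exact: subset_trans sAA' (subsetUr _ _).
by rewrite cardsU1 A'x cardA'.
Qed.

Lemma ler_sum_subset (R : numDomainType) (I : finType) (A B : {set I})
    (F : I -> R) :
  (forall i, 0 <= F i) -> A \subset B ->
  \sum_(i in A) F i <= \sum_(i in B) F i.
Proof.
move=> F_ge0 sAB; rewrite [leRHS](big_setID A) /= (setIidPr sAB) lerDl.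
exact: sumr_ge0.
Qed.

Lemma card_ge1_le_sum (R : numDomainType) (I : finType) (f : I -> R) :
  (forall i, 0 <= f i) -> #|[set i | 1 <= f i]|%:R <= \sum_i f i.
Proof.
move=> f_ge0; rewrite -sum1_card natr_sum [leRHS](bigID [in [set i | 1 <= f i]]).
rewrite -[leLHS]addr0 lerD ?sumr_ge0 //.
by apply: ler_sum => i; rewrite inE.
Qed.

Lemma sum_mul_le_threshold (R : realFieldType) (I : finType) (c q : I -> R)
    (d : R) :
  0 < d -> (forall i, 0 <= c i) -> (forall i, 0 <= q i <= 1) ->
  \sum_i c i * q i <=
    \sum_(i in [set i | 1 <= d * q i]) c i + (\sum_i c i) / d.
Proof.
move=> d_gt0 c_ge0 q01; set S := [set i | 1 <= d * q i].
rewrite (bigID [in S]) mulr_suml [X in _ <= _ + X](bigID [in S]) /=.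
apply: lerD; first apply: ler_sum => i _.
  by have /andP[_ q_le1] := q01 i; rewrite ler_piMr.
apply: ler_wpDl; first by apply: sumr_ge0 => i _; rewrite divr_ge0 ?c_ge0 // ltW.
apply: ler_sum => i; rewrite inE -ltNge => /ltW q_small.
by rewrite ler_wpM2l // -[d^-1]mulr1 ler_pdivlMl.
Qed.

Section Influence.
Variables (R : realDomainType) (n : nat).
Implicit Types (P Q : 'M[R]_n) (A B : {set 'I_n}).

Definition influence P B := \sum_(i < n) \sum_(j in B) P i j.

Definition colsum P j := \sum_(i < n) P i j.

Lemma influenceE P B : influence P B = \sum_(j in B) colsum P j.
Proof. exact: exchange_big. Qed.

Lemma influence_mulmx P Q B :
  influence (P *m Q) B = \sum_k colsum P k * \sum_(j in B) Q k j.
Proof.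
rewrite /influence /colsum.
under eq_bigr => i _ do under eq_bigr => j _ do rewrite mxE.
under [RHS]eq_bigr => k _ do rewrite mulr_suml.
rewrite [RHS]exchange_big /=; apply: eq_bigr => i _.
by rewrite exchange_big /=; apply: eq_bigr => k _; rewrite mulr_sumr.
Qed.

Lemma sum_colsum_stochastic P : stochastic P -> \sum_k colsum P k = n%:R.
Proof.
case=> _ rowsum1; rewrite exchange_big /=.
by rewrite (eq_bigr _ (fun i _ => rowsum1 i)) sumr_const card_ord.
Qed.

Lemma Phi_nat_ge0 P s : 0 <= Phi_nat P s.
Proof. exact: bigmax_ge_id. Qed.

Lemma influence_le_Phi_nat_eq P s B :
  #|B| = minn s n -> influence P B <= Phi_nat P s.
Proof. by move=> cardB; apply: le_bigmax_cond; rewrite cardB. Qed.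

Lemma influence_le_Phi_nat P s A :
  (forall i j, 0 <= P i j) -> (#|A| <= s)%N -> influence P A <= Phi_nat P s.
Proof.
move=> P_ge0 cardA.
have [A' sAA' cardA'] : exists2 A' : {set 'I_n}, A \subset A' & #|A'| = minn s n.
  apply: exists_superset_card.
  by rewrite leq_min cardA -[leqRHS]card_ord max_card card_ord geq_minr.
apply: le_trans (influence_le_Phi_nat_eq P cardA').
by rewrite !influenceE ler_sum_subset // => j; apply: sumr_ge0.
Qed.

End Influence.

Theorem lemma5 (R : archiRealFieldType) (n : nat) (P Q : 'M[R]_n)
  (hP : stochastic P) (hQ : stochastic Q) (delta : R) (hdelta : 0 < delta)
  (s : nat) (hs : (s <= n)%N) :
  Phi_nat (P *m Q) s <= Phi P (delta * Phi_nat Q s) + n%:R / delta.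
Proof.
have [[P_ge0 _] [Q_ge0 Q_rowsum1]] := (hP, hQ).
apply: bigmax_le => [|B /eqP cardB].
  by rewrite addr_ge0 ?Phi_nat_ge0 // divr_ge0 // ltW.
pose q k := \sum_(j in B) Q k j.
have q01 k : 0 <= q k <= 1.
  rewrite sumr_ge0 => [|j _]; last exact: Q_ge0.
  rewrite -(Q_rowsum1 k) [leRHS](bigID [in B]) /= lerDl.
  by apply: sumr_ge0 => j _; apply: Q_ge0.
have sum_q : \sum_k q k <= Phi_nat Q s := influence_le_Phi_nat_eq Q cardB.
set A := [set k | 1 <= delta * q k].
have cardA : (#|A| <= minn (Num.truncn (delta * Phi_nat Q s)) n)%N.
  rewrite leq_min andbC -[leqRHS]card_ord max_card /=.
  rewrite truncn_ge_nat; last by rewrite mulr_ge0 ?Phi_nat_ge0 // ltW.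
  have dq_ge0 k : 0 <= delta * q k.
    by have /andP[q_ge0 _] := q01 k; rewrite mulr_ge0 // ltW.
  apply: le_trans (card_ge1_le_sum dq_ge0) _.
  by rewrite -mulr_sumr ler_wpM2l // ltW.
have colsum_ge0 k : 0 <= colsum P k by apply: sumr_ge0.
rewrite -[leLHS]/(influence (P *m Q) B) influence_mulmx.
apply: le_trans (sum_mul_le_threshold hdelta colsum_ge0 q01) _.
rewrite sum_colsum_stochastic // lerD2r -influenceE.
exact: influence_le_Phi_nat.
Qed.
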